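(* Let $\bm H$ be a finite-dimensional Hilbert space, $\rho_{\rm i}$ a density operator on $\bm H$, $U$ a unitary on $\bm H$, and $\rho':=U\rho_{\rm i}U^\dagger$. Let $\{M_b\}_{b\in B}\subset L(\bm H)$ with $B$ finite and $\sum_b M_b^\dagger M_b=I$; put $E_b:=M_b^\dagger M_b$, $p(b):=\mathrm{tr}[E_b\rho']$, and for $p(b)>0$, $\rho'(b):=M_b\rho' M_b^\dagger/p(b)$. Let $I_{\rm QC}:=S(\rho')-\sum_b p(b)S(\rho'(b))$. For each $b$ let $U_b$ be a unitary on $\bm H$, $\rho_{\rm f}(b):=U_b\rho'(b)U_b^\dagger$, and let $\rho_0(b)$ be a density operator on $\bm H$. Then (all sums over $b$ with $p(b)>0$) $$-\sum_b p(b)\,\mathrm{tr}[\rho_{\rm f}(b)\ln\rho_0(b)]-S(\rho_{\rm i})=\sum_b p(b)\,S(\rho_{\rm f}(b)\|\rho_0(b))-I_{\rm QC},$$ and consequently $$-\sum_b p(b)\,\mathrm{tr}[\rho_{\rm f}(b)\ln\rho_0(b)]-S(\rho_{\rm i})\ge -I_{\rm QC}.$$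
   Context: $S(\rho):=-\mathrm{tr}[\rho\ln\rho]$ is the von Neumann entropy. The quantum relative entropy is $S(\rho\|\sigma):=\mathrm{tr}[\rho\ln\rho]-\mathrm{tr}[\rho\ln\sigma]$, set to $+\infty$ if there is $|\psi\rangle$ with $\sigma|\psi\rangle=0$ and $\langle\psi|\rho|\psi\rangle\ne0$; correspondingly $-\mathrm{tr}[\rho\ln\sigma]$ is $+\infty$ in that case and otherwise computed on the support of $\sigma$; $0\ln0=0$. *)

From HB Require Import structures.
From mathcomp Require Import all_boot all_order all_algebra.
From mathcomp Require Import sesquilinear spectral.
From mathcomp Require Import complex.
From mathcomp Require Import boolp reals constructive_ereal exp.
Set Implicit Arguments. Unset Strict Implicit. Unset Printing Implicit Defensive.
Import Order.TTheory GRing.Theory Num.Theory.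
Local Open Scope ring_scope.
Local Open Scope sesquilinear_scope.
Local Open Scope complex_scope.

Section Quantum.
Variable R : realType.
Local Notation C := R[i].
Variable n : nat.

(* Vectors of the Hilbert space C^n are column vectors 'cV_n;
   <v|A|v> = (v^t* *m A *m v) 0 0. *)

Definition density (rho : 'M[C]_n) : Prop :=
  [/\ rho \is hermsymmx,
      forall v : 'cV[C]_n, 0 <= (v^t* *m rho *m v) 0 0
    & \tr rho = 1].

Definition ln_supp (x : C) : C := if x == 0 then 0 else (ln (complex.Re x))%:C.

(* matrix logarithm of a normal (here: PSD) matrix via its spectral
   decomposition A = P^-1 diag(d) P, computed on the support of A *)
Definition lnmx (A : 'M[C]_n) : 'M[C]_n :=
  invmx (spectralmx A) *m diag_mx (map_mx ln_supp (spectral_diag A))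
    *m spectralmx A.

(* von Neumann entropy  S(rho) = - tr[rho ln rho]  (0 ln 0 = 0) *)
Definition vN_entropy (rho : 'M[C]_n) : R := - complex.Re (\tr (rho *m lnmx rho)).

Definition neg_tr_log (rho sigma : 'M[C]_n) : \bar R :=
  if `[< exists v : 'cV[C]_n, sigma *m v = 0 /\ (v^t* *m rho *m v) 0 0 <> 0 >]
  then +oo%E
  else (- complex.Re (\tr (rho *m lnmx sigma)))%:E.

Definition rel_entropy (rho sigma : 'M[C]_n) : \bar R :=
  ((- vN_entropy rho)%:E + neg_tr_log rho sigma)%E.

Variable B : finType.
Variable M : B -> 'M[C]_n.

Definition meas_prob (rho : 'M[C]_n) (b : B) : R :=
  complex.Re (\tr ((M b)^t* *m M b *m rho)).

Definition post_state (rho : 'M[C]_n) (b : B) : 'M[C]_n :=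
  ((meas_prob rho b)^-1)%:C *: (M b *m rho *m (M b)^t*).

Definition I_QC (rho : 'M[C]_n) : R :=
  vN_entropy rho
  - \sum_(b | 0 < meas_prob rho b) meas_prob rho b * vN_entropy (post_state rho b).

End Quantum.

From HB Require Import structures.
From mathcomp Require Import all_boot all_order all_algebra.
From mathcomp Require Import sesquilinear spectral.
From mathcomp Require Import complex.
From mathcomp Require Import boolp reals constructive_ereal exp.
From mathcomp Require Import ring lra.
Set Implicit Arguments. Unset Strict Implicit. Unset Printing Implicit Defensive.
Import Order.TTheory GRing.Theory Num.Theory.
Local Open Scope ring_scope.
Local Open Scope sesquilinear_scope.
Local Open Scope complex_scope.

(* Unitary conjugation preserves the spectrum, so S(rho') = S(rho_i) and
   S(rho_f(b)) = S(rho'(b)), and the post-measurement states are density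
   operators.  Writing S(rho_f(b) || rho_0(b)) = -S(rho_f(b)) - tr[rho_f(b) ln
   rho_0(b)] then gives the identity, and the inequality is Klein's inequality
   S(rho || sigma) >= 0.  In the eigenbases of rho and sigma the latter becomes
   a sum over the doubly stochastic matrix |<e_i|f_j>|^2 of the scalar
   inequalities a - b <= a (ln a - ln b), i.e. ln x <= x - 1. *)

Section QuantumEntropy.
Variable R : realType.
Local Notation C := R[i].
Variable n : nat.
Implicit Types (A G P Q V X rho sigma : 'M[C]_n) (a b : 'rV[C]_n) (k : C).
Local Notation ket j := (delta_mx j 0 : 'cV[C]_n).

Lemma trmxC_mul m p q (A : 'M[C]_(m, p)) (B : 'M[C]_(p, q)) :
  (A *m B)^t* = B^t* *m A^t*.
Proof. by rewrite trmx_mul map_mxM. Qed.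

Lemma trmxC_scale k A : (k *: A)^t* = k^* *: A^t*.
Proof. by apply/matrixP => i j; rewrite !mxE rmorphM. Qed.

Lemma unitarymx_trmxC X : X \is unitarymx -> X^t* \is unitarymx.
Proof. by rewrite trmxC_unitary. Qed.

Lemma hermsymmxP A : reflect (A^t* = A) (A \is hermsymmx).
Proof. by rewrite qualifE expr0 scale1r; apply: (iffP eqP) => [<-|->]. Qed.

(* The squared moduli [|X_ij|^2] of a unitary [X] form a doubly stochastic
   matrix; this is how two spectral decompositions are compared. *)
Definition unistochastic X i j := X i j * (X i j)^*.

Lemma unistochastic_ge0 X i j : 0 <= unistochastic X i j.
Proof. exact: mul_conjC_ge0. Qed.

Lemma unistochastic_row X i : X \is unitarymx ->
  \sum_j unistochastic X i j = 1.
Proof.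
move=> /unitarymxP XU; have := congr1 (fun Y : 'M[C]_n => Y i i) XU.
by rewrite !mxE eqxx mulr1n => <-; apply: eq_bigr => j _; rewrite !mxE.
Qed.

Lemma unistochastic_col X j : X \is unitarymx ->
  \sum_i unistochastic X i j = 1.
Proof.
rewrite -trmxC_unitary => /unitarymxP XU.
have := congr1 (fun Y : 'M[C]_n => Y j j) XU.
rewrite !mxE eqxx mulr1n => <-; apply: eq_bigr => i _.
by rewrite !mxE /unistochastic mulrC conjCK.
Qed.

Lemma unistochastic1 i j : unistochastic 1%:M i j = (i == j)%:R.
Proof.
rewrite /unistochastic !mxE.
by case: eqP; rewrite ?conjC1 ?conjC0 ?mulr1 ?mulr0.
Qed.

Lemma mxtrace_diag_conj a b X :
  \tr (diag_mx a *m X *m diag_mx b *m X^t*) =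
  \sum_i \sum_j a 0 i * b 0 j * unistochastic X i j.
Proof.
rewrite /mxtrace; apply: eq_bigr => i _; rewrite mxE; apply: eq_bigr => j _.
rewrite mul_mx_diag mul_diag_mx !mxE /unistochastic -!mulrA.
by congr (_ * _); rewrite mulrCA.
Qed.

Lemma mxtrace_spectral_mul P Q a b : P \is unitarymx -> Q \is unitarymx ->
  \tr ((invmx P *m diag_mx a *m P) *m (invmx Q *m diag_mx b *m Q)) =
  \sum_i \sum_j a 0 i * b 0 j * unistochastic (P *m Q^t*) i j.
Proof.
move=> PU QU.
rewrite (invmx_unitary PU) (invmx_unitary QU) -mxtrace_diag_conj.
rewrite (_ : _ *m _ = P^t* *m (diag_mx a *m P *m Q^t* *m diag_mx b *m Q));
  last by rewrite !mulmxA.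
by rewrite (mxtrace_mulC (P^t*)) trmxC_mul trmxCK !mulmxA.
Qed.

Lemma trmxC_delta j : (ket j)^t* = delta_mx 0 j.
Proof. by apply/matrixP => k l; rewrite !mxE andbC rmorph_nat. Qed.

Lemma quad_form_delta A j :
  ((ket j)^t* *m A *m ket j) 0 0 = A j j.
Proof. by rewrite trmxC_delta -rowE -colE !mxE. Qed.

Lemma diag_conj_entry a X j :
  (X^t* *m diag_mx a *m X) j j = \sum_i a 0 i * unistochastic X i j.
Proof.
rewrite -mulmxA mxE; apply: eq_bigr => i _.
by rewrite mul_diag_mx !mxE /unistochastic mulrCA [X i j * _]mulrC.
Qed.

Lemma spectral_quad_form P Q a j : P \is unitarymx -> Q \is unitarymx ->
  ((Q^t* *m ket j)^t* *m (invmx P *m diag_mx a *m P) *m (Q^t* *m ket j)) 0 0 =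
  \sum_i a 0 i * unistochastic (P *m Q^t*) i j.
Proof.
move=> PU QU; rewrite -(diag_conj_entry a (P *m Q^t*)) -(quad_form_delta _ j).
rewrite (invmx_unitary PU).
by rewrite !trmxC_mul !trmxCK !mulmxA.
Qed.

Lemma normalmx_spectralE A : A \is normalmx ->
  A = invmx (spectralmx A) *m diag_mx (spectral_diag A) *m spectralmx A.
Proof. by move/orthomx_spectralP. Qed.

Lemma spectral_eigenvector A j : A \is normalmx ->
  A *m ((spectralmx A)^t* *m ket j) =
  spectral_diag A 0 j *: ((spectralmx A)^t* *m ket j).
Proof.
move=> AN; have QU := spectral_unitarymx A.
rewrite {1}(normalmx_spectralE AN) (invmx_unitary QU) -!mulmxA.
rewrite [spectralmx A *m _]mulmxA (unitarymxP QU) mul1mx scalemxAr.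
congr (_ *m _); apply/matrixP => k l; rewrite mul_diag_mx !mxE.
by case: eqP => [->|_]; rewrite ?mulr0 ?mulr1.
Qed.

Lemma mxtrace_mul_lnmx A : A \is normalmx ->
  \tr (A *m lnmx A) =
  \sum_i spectral_diag A 0 i * ln_supp (spectral_diag A 0 i).
Proof.
move=> AN; have PU := spectral_unitarymx A.
rewrite {1}(normalmx_spectralE AN) /lnmx mxtrace_spectral_mul //.
rewrite (unitarymxP PU).
apply: eq_bigr => i _; rewrite (bigD1 i) //= big1 => [|j ji].
  by rewrite unistochastic1 eqxx mulr1 addr0 mxE.
by rewrite unistochastic1 eq_sym (negPf ji) mulr0.
Qed.

Lemma vN_entropy_spectral A : A \is normalmx ->
  vN_entropy A = - complex.Re
    (\sum_i spectral_diag A 0 i * ln_supp (spectral_diag A 0 i)).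
Proof. by move=> AN; rewrite -mxtrace_mul_lnmx. Qed.

Lemma eq_spectral_sum P Q a b (f : C -> C) :
  P \is unitarymx -> Q \is unitarymx ->
  invmx P *m diag_mx a *m P = invmx Q *m diag_mx b *m Q ->
  \sum_i f (a 0 i) = \sum_j f (b 0 j).
Proof.
move=> PU QU; rewrite (invmx_unitary PU) (invmx_unitary QU) => PQ.
set X := P *m Q^t*.
have XU : X \is unitarymx := mul_unitarymx PU (unitarymx_trmxC QU).
have aX_Xb : diag_mx a *m X = X *m diag_mx b.
  rewrite (_ : diag_mx a *m X = P *m (P^t* *m diag_mx a *m P) *m Q^t*).
    by rewrite PQ /X !mulmxA (mulmxtVK _ QU).
  by rewrite /X !mulmxA (unitarymxP PU) mul1mx.
have intertwine i j : a 0 i * X i j = X i j * b 0 j.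
  have := congr1 (fun Y : 'M[C]_n => Y i j) aX_Xb.
  by rewrite mul_diag_mx mul_mx_diag !mxE.
(* [X_ij != 0] forces [a_i = b_j], so weighting by [|X_ij|^2] moves [f]
   from the [a]'s to the [b]'s. *)
transitivity (\sum_i \sum_j unistochastic X i j * f (a 0 i)).
  by apply: eq_bigr => i _; rewrite -mulr_suml unistochastic_row // mul1r.
transitivity (\sum_i \sum_j unistochastic X i j * f (b 0 j)).
  apply: eq_bigr => i _; apply: eq_bigr => j _.
  have [X0|Xn0] := eqVneq (X i j) 0; first by rewrite /unistochastic X0 !mul0r.
  by move: (intertwine i j); rewrite mulrC => /(mulfI Xn0) ->.
rewrite exchange_big; apply: eq_bigr => j _.
by rewrite -mulr_suml unistochastic_col // mul1r.
Qed.

Lemma vN_entropy_unitary_conj A V : A \is normalmx -> V \is unitarymx ->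
  vN_entropy (V *m A *m V^t*) = vN_entropy A.
Proof.
move=> AN VU; have PU := spectral_unitarymx A.
have QU : spectralmx A *m V^t* \is unitarymx.
  exact: mul_unitarymx PU (unitarymx_trmxC VU).
have E : V *m A *m V^t* = invmx (spectralmx A *m V^t*) *m
    diag_mx (spectral_diag A) *m (spectralmx A *m V^t*).
  rewrite (invmx_unitary QU) trmxC_mul trmxCK {1}(normalmx_spectralE AN).
  by rewrite (invmx_unitary PU) !mulmxA.
have BN : V *m A *m V^t* \is normalmx.
  apply/orthomx_spectral_subproof.
  by exists (spectralmx A *m V^t*, spectral_diag A).
rewrite !vN_entropy_spectral //; congr (- complex.Re _).
exact: eq_spectral_sum (fun x => x * ln_supp x) (spectral_unitarymx _) QU
  (etrans (esym (normalmx_spectralE BN)) E).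
Qed.

Lemma ln_supp_real (x : R) : ln_supp x%:C = (ln x)%:C.
Proof.
rewrite /ln_supp; have [->|x0] := eqVneq x 0; first by rewrite eqxx ln0.
by rewrite ifN //; apply: contra x0 => /eqP [] ->.
Qed.

Lemma sub_le_mul_lnB (a b : R) : 0 < a -> 0 < b -> a - b <= a * (ln a - ln b).
Proof.
move=> a0 b0; have ba0 : 0 < b / a by rewrite divr_gt0.
have := @le_ln1Dx R (b / a - 1); rewrite [1 + _]addrC subrK.
rewrite ltrBrDr addrC subrr ba0 ln_div ?posrE // => /(_ isT) lnba.
have := ler_wpM2l (ltW a0) lnba.
rewrite [a * (b / a - 1)]mulrBr mulr1 mulrCA divff ?gt_eqF // mulr1 !mulrBr.
lra.
Qed.

Lemma klein_term (a b c : R) : 0 <= a -> 0 <= b -> 0 <= c ->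
  (b = 0 -> a * c = 0) -> c * (a - b) <= c * a * (ln a - ln b).
Proof.
move=> a0 b0 c0 supp.
have [->|cn0] := eqVneq c 0; first by rewrite !mul0r.
have [->|an0] := eqVneq a 0.
  by rewrite mulr0 mul0r sub0r mulrN oppr_le0 mulr_ge0.
have [b00|bn0] := eqVneq b 0.
  by move/eqP: (supp b00); rewrite mulf_eq0 (negPf an0) (negPf cn0).
by rewrite -mulrA ler_wpM2l // sub_le_mul_lnB // lt_def ?an0 ?bn0.
Qed.

Lemma complex_ge0E (x : C) : 0 <= x -> x = (complex.Re x)%:C.
Proof. by move=> x0; rewrite RRe_real // ger0_real. Qed.

(* Klein's inequality in the two eigenbases, [w] being their unistochastic
   transition matrix; the last hypothesis encodes the finiteness of the
   relative entropy. *)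
Lemma stochastic_klein_ge0 (r s : 'I_n -> C) (w : 'I_n -> 'I_n -> C) :
  (forall i, 0 <= r i) -> (forall j, 0 <= s j) -> (forall i j, 0 <= w i j) ->
  (forall i, \sum_j w i j = 1) -> (forall j, \sum_i w i j = 1) ->
  \sum_i r i = \sum_j s j ->
  (forall i j, s j = 0 -> r i * w i j = 0) ->
  0 <= \sum_i r i * ln_supp (r i) - \sum_i \sum_j r i * ln_supp (s j) * w i j.
Proof.
move=> r0 s0 w0 wr wc rs supp.
have -> : \sum_i r i * ln_supp (r i) =
    \sum_i \sum_j r i * ln_supp (r i) * w i j.
  by apply: eq_bigr => i _; rewrite -mulr_sumr wr mulr1.
have balance : \sum_i \sum_j w i j * (r i - s j) = 0.
  have -> : \sum_i \sum_j w i j * (r i - s j) =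
      \sum_i \sum_j w i j * r i - \sum_i \sum_j w i j * s j.
    rewrite -sumrB; apply: eq_bigr => i _; rewrite -sumrB.
    by apply: eq_bigr => j _; rewrite mulrBr.
  rewrite [X in _ - X]exchange_big /=.
  under eq_bigr do rewrite -mulr_suml wr mul1r.
  under [X in _ - X]eq_bigr do rewrite -mulr_suml wc mul1r.
  by rewrite rs subrr.
rewrite -sumrB -[X in X <= _]balance; apply: ler_sum => i _; rewrite -sumrB.
apply: ler_sum => j _; move: (r0 i) (s0 j) (w0 i j) (supp i j).
rewrite (complex_ge0E (r0 i)) (complex_ge0E (s0 j)) (complex_ge0E (w0 i j)).
rewrite !ln_supp_real !lecR.
set a := complex.Re (r i); set b := complex.Re (s j).
set c := complex.Re (w i j).
move=> a0 b0 c0 supp_ij.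
rewrite (_ : c%:C * (a%:C - b%:C) = (c * (a - b))%:C); last by ring.
rewrite (_ : _ - _ = (c * a * (ln a - ln b))%:C); last by ring.
rewrite lecR klein_term // => b00.
by move: (supp_ij (congr1 _ b00)); rewrite -rmorphM => -[].
Qed.

Lemma density_normalmx A : density A -> A \is normalmx.
Proof. by case=> /hermitian_normalmx. Qed.

Lemma density_eig_ge0 A i : density A -> 0 <= spectral_diag A 0 i.
Proof.
move=> dA; have E := normalmx_spectralE (density_normalmx dA).
have PU := spectral_unitarymx A.
set P := spectralmx A in E PU *; set d := spectral_diag A in E *.
have := (let: And3 _ psdA _ := dA in psdA) (P^t* *m ket i).
rewrite E spectral_quad_form // (unitarymxP PU) (bigD1 i) //= unistochastic1.
rewrite eqxx mulr1 big1 ?addr0 // => k /negPf ki.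
by rewrite unistochastic1 ki mulr0.
Qed.

Lemma density_eig_sum1 A : density A -> \sum_i spectral_diag A 0 i = 1.
Proof.
move=> dA; have PU := spectral_unitarymx A.
rewrite -mxtrace_diag -(let: And3 _ _ trA := dA in trA).
rewrite {2}(normalmx_spectralE (density_normalmx dA)) (invmx_unitary PU).
by rewrite -mulmxA mxtrace_mulC -mulmxA (unitarymxP PU) mulmx1.
Qed.

Lemma rel_entropy_ge0 rho sigma : density rho -> density sigma ->
  (0 <= rel_entropy rho sigma)%E.
Proof.
move=> dr ds; have rN := density_normalmx dr; have sN := density_normalmx ds.
rewrite /rel_entropy /neg_tr_log; case: asboolP => [_|nker].
  by rewrite addey ?leey.
rewrite -EFinD lee_fin vN_entropy_spectral // opprK.
have r0 i : 0 <= spectral_diag rho 0 i := density_eig_ge0 i dr.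
have s0 j : 0 <= spectral_diag sigma 0 j := density_eig_ge0 j ds.
have rs := etrans (density_eig_sum1 dr) (esym (density_eig_sum1 ds)).
have Er := normalmx_spectralE rN; have Es j := spectral_eigenvector j sN.
have PU := spectral_unitarymx rho; have QU := spectral_unitarymx sigma.
set P := spectralmx rho in Er PU *; set r := spectral_diag rho in Er r0 rs *.
set Q := spectralmx sigma in Es QU *.
set s := spectral_diag sigma in Es s0 rs *.
have XU : P *m Q^t* \is unitarymx := mul_unitarymx PU (unitarymx_trmxC QU).
have supp i j : s 0 j = 0 -> r 0 i * unistochastic (P *m Q^t*) i j = 0.
  move=> sj0; have : \sum_k r 0 k * unistochastic (P *m Q^t*) k j = 0.
    rewrite -(spectral_quad_form r j PU QU) -Er; apply: contra_notP nker => qv.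
    by exists (Q^t* *m ket j); rewrite Es sj0 scale0r.
  by move/psumr_eq0P => -> // k _; rewrite mulr_ge0 ?unistochastic_ge0.
have := stochastic_klein_ge0 r0 s0 (unistochastic_ge0 _)
  (fun i => unistochastic_row i XU) (fun j => unistochastic_col j XU) rs supp.
rewrite /lnmx Er (mxtrace_spectral_mul r (map_mx (@ln_supp R) s) PU QU).
under [X in _ -> _ <= _ + - complex.Re X]eq_bigr do
  under eq_bigr do rewrite mxE.
move: (\sum_i _) (\sum_i _) => [x1 x2] [y1 y2].
by rewrite lecE => /andP[].
Qed.

Lemma hermsymmx_conj G A : A \is hermsymmx -> G *m A *m G^t* \is hermsymmx.
Proof.
by move/hermsymmxP => hA; apply/hermsymmxP; rewrite !trmxC_mul trmxCK hA mulmxA.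
Qed.

Definition psdmx A := forall v : 'cV[C]_n, 0 <= (v^t* *m A *m v) 0 0.

Lemma psdmx_conj G A : psdmx A -> psdmx (G *m A *m G^t*).
Proof.
by move=> psdA v; have := psdA (G^t* *m v); rewrite trmxC_mul trmxCK !mulmxA.
Qed.

Lemma psdmx_scale k A : 0 <= k -> psdmx A -> psdmx (k *: A).
Proof. by move=> k0 psdA v; rewrite -scalemxAr -scalemxAl mxE mulr_ge0. Qed.

Lemma mxtrace_unitary_conj G A : G \is unitarymx ->
  \tr (G *m A *m G^t*) = \tr A.
Proof.
move=> GU; rewrite mxtrace_mulC mulmxA.
have := unitarymxP (unitarymx_trmxC GU).
by rewrite trmxCK => ->; rewrite mul1mx.
Qed.

Lemma mxtrace_psd_ge0 A : psdmx A -> 0 <= \tr A.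
Proof.
move=> psdA; rewrite /mxtrace; apply: sumr_ge0 => j _.
by rewrite -quad_form_delta.
Qed.

Lemma density_unitary_conj G A : G \is unitarymx -> density A ->
  density (G *m A *m G^t*).
Proof.
move=> GU [hA psdA trA]; split; first exact: hermsymmx_conj.
  exact: psdmx_conj.
by rewrite mxtrace_unitary_conj.
Qed.

Lemma mule_rel_entropy (p : R) rho sigma : 0 < p ->
  (p%:E * rel_entropy rho sigma =
   (- (p * vN_entropy rho))%:E + p%:E * neg_tr_log rho sigma)%E.
Proof.
move=> p0; rewrite /rel_entropy /neg_tr_log; case: ifP => _.
  by rewrite gt0_muley ?lte_fin.
by rewrite -EFinD -!EFinM -EFinD mulrDr mulrN.
Qed.

Variables (B : finType) (M : B -> 'M[C]_n).

Lemma density_post_state rho (b : B) : density rho ->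
  0 < meas_prob M rho b -> density (post_state M rho b).
Proof.
move=> [hr psdr _] pb; set c := (meas_prob M rho b)^-1.
have c0 : 0 <= c by rewrite invr_ge0 ltW.
split.
- rewrite /post_state; apply/hermsymmxP.
  have /hermsymmxP hX := hermsymmx_conj (M b) hr.
  by rewrite trmxC_scale hX conj_Creal // ger0_real // lecR.
- by apply: psdmx_scale; [rewrite lecR | exact: psdmx_conj].
rewrite /post_state mxtraceZ mxtrace_mulC mulmxA.
have t0 : 0 <= \tr ((M b)^t* *m M b *m rho).
  by rewrite -mulmxA mxtrace_mulC; apply/mxtrace_psd_ge0/psdmx_conj.
by rewrite (complex_ge0E t0) -rmorphM /c /meas_prob mulVf ?gt_eqF.
Qed.

End QuantumEntropy.

Theorem theorem6p1 (R : realType) (n : nat) (B : finType)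
  (rho_i U : 'M[R[i]]_n) (M Ub rho0 : B -> 'M[R[i]]_n) :
  density rho_i ->
  U \is unitarymx ->
  \sum_(b : B) (M b)^t* *m M b = 1%:M ->
  (forall b, Ub b \is unitarymx) ->
  (forall b, density (rho0 b)) ->
  let rho' := U *m rho_i *m U^t* in
  let p := meas_prob M rho' in
  let rho_f := fun b => Ub b *m post_state M rho' b *m (Ub b)^t* in
  let LHS := (\sum_(b | (0 < p b)%R) (p b)%:E * neg_tr_log (rho_f b) (rho0 b)
              - (vN_entropy rho_i)%:E)%E in
  (LHS = \sum_(b | (0 < p b)%R) (p b)%:E * rel_entropy (rho_f b) (rho0 b)
           - (I_QC M rho')%:E)%E
  /\ (- (I_QC M rho')%:E <= LHS)%E.
Proof.
move=> dI UU _ UbU d0 rho' p rho_f LHS.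
have d' : density rho' := density_unitary_conj UU dI.
have dpost b : 0 < p b -> density (post_state M rho' b).
  exact: density_post_state d'.
have S_rho' : vN_entropy rho' = vN_entropy rho_i.
  exact: vN_entropy_unitary_conj (density_normalmx dI) UU.
have S_rho_f b : 0 < p b ->
    vN_entropy (rho_f b) = vN_entropy (post_state M rho' b).
  move=> pb.
  exact: vN_entropy_unitary_conj (density_normalmx (dpost b pb)) (UbU b).
have decomp : LHS = (\sum_(b | (0 < p b)%R)
    (p b)%:E * rel_entropy (rho_f b) (rho0 b) - (I_QC M rho')%:E)%E.
  have step b : (0 < p b)%R -> ((p b)%:E * rel_entropy (rho_f b) (rho0 b) =
      (- (p b * vN_entropy (post_state M rho' b)))%:E +
      (p b)%:E * neg_tr_log (rho_f b) (rho0 b))%E.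
    by move=> pb; rewrite (mule_rel_entropy _ _ pb) (S_rho_f b pb).
  rewrite (eq_bigr _ step) big_split /= sumEFin /LHS /I_QC S_rho' sumrN.
  by rewrite [RHS]addeAC -EFinD opprB addKr addeC.
split; first exact: decomp.
rewrite decomp; apply: lee_paddl; last exact: lexx.
apply: sume_ge0 => b pb; apply: mule_ge0; first by rewrite lee_fin ltW.
exact: rel_entropy_ge0 (density_unitary_conj (UbU b) (dpost b pb)) (d0 b).
Qed.
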